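(* Let measurements be modeled by a Gaussian process on $\mathbb{R}^2$ with squared-exponential kernel $k(x,x')=\sigma_0^2\exp\!\left(-\frac{\|x-x'\|^2}{2l^2}\right)$ ($\sigma_0^2>0$, $l>0$) and i.i.d. additive Gaussian noise of variance $\omega^2>0$. Let $0<\Delta<\sigma_0^2$, let $r_{max}=l\sqrt{-\log\left(1-\frac{\Delta}{\sigma_0^2}\right)}$, and let $\alpha>1$. Given a disk of radius $\frac{1}{\alpha}r_{max}$ centered at $x_i$, taking $n_\alpha$ measurements at $x_i$ suffices to ensure $MSE(x)\le\Delta$ for all points $x$ inside the disk, whenever $$n_\alpha\ge\left\lceil\frac{\omega^2}{\sigma_0^2}\,\frac{1}{\left(1-\frac{\Delta}{\sigma_0^2}\right)^{\frac{1}{\alpha^2}-1}-1}\right\rceil.$$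
   Context: For measurement locations $X=(x_1,\dots,x_n)$ (repetitions allowed, meaning multiple measurements at one location), the GP posterior variance at $x$ is $\hat\sigma^2_{x|X}=k(x,x)-\mathbf{k}(x,X)\left[\mathbf{K}(X,X)+\omega^2\mathbf{I}\right]^{-1}\mathbf{k}(X,x)$, where $\mathbf{K}(X,X)$ has entries $k(x_p,x_q)$ and $\mathbf{k}(x,X)=(k(x,x_1),\dots,k(x,x_n))$. The MSE at $x$ is $MSE(x)=\hat\sigma^2_{x|X}$. *)

From HB Require Import structures.
From mathcomp Require Import all_boot all_order all_algebra.
From mathcomp Require Import all_classical all_reals all_analysis.
Set Implicit Arguments. Unset Strict Implicit. Unset Printing Implicit Defensive.
Import Order.TTheory GRing.Theory Num.Theory.
Local Open Scope ring_scope.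

Definition sqdist {R : realType} (x y : 'rV[R]_2) : R :=
  \sum_(i < 2) (x 0 i - y 0 i) ^+ 2.

(* Squared-exponential kernel k(x,x') = s0 exp(-||x-x'||^2/(2 l^2)), s0 = sigma_0^2 *)
Definition se_kernel {R : realType} (s0 l : R) (x y : 'rV[R]_2) : R :=
  s0 * expR (- (sqdist x y) / (2 * l ^+ 2)).

(* GP posterior variance at x given measurement locations X (repetitions allowed)
   and noise variance w2 = omega^2:
   k(x,x) - k(x,X) [K(X,X) + w2 I]^{-1} k(X,x). *)
Definition post_var {R : realType} (k : 'rV[R]_2 -> 'rV[R]_2 -> R) (w2 : R)
  (n : nat) (X : 'I_n -> 'rV[R]_2) (x : 'rV[R]_2) : R :=
  let K : 'M[R]_n := \matrix_(p, q) k (X p) (X q) in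
  let kx : 'rV[R]_n := \row_p k x (X p) in
  k x x - (kx *m invmx (K + w2%:M) *m kx^T) 0 0.

Definition MSE {R : realType} k w2 n X x : R := @post_var R k w2 n X x.

From HB Require Import structures.
From mathcomp Require Import all_boot all_order all_algebra.
From mathcomp Require Import all_classical all_reals all_analysis.
From mathcomp Require Import ring.
Import Order.TTheory GRing.Theory Num.Theory.
Local Open Scope ring_scope.

(* With all n measurements at xi, K(X,X) + w2 I = s0 J + w2 I with J the
   all-ones matrix; the constant vector is an eigenvector for the eigenvalue
   n s0 + w2, so MSE(x) = s0 - n k(x,xi)^2 / (n s0 + w2).  Put b = 1 - Delta/s0.
   Inside the disk k(x,xi)^2 >= s0^2 b^(1/alpha^2), and the bound on n says
   exactly that n s0 / (n s0 + w2) >= b^(1 - 1/alpha^2); multiplying the two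
   bounds gives MSE(x) <= s0 (1 - b) = Delta. *)

Lemma mul_const_mx (R : pzSemiRingType) m n p (a b : R) :
  (const_mx a : 'M[R]_(m, n)) *m (const_mx b : 'M[R]_(n, p)) = const_mx (a * b *+ n).
Proof.
apply/matrixP => i j; rewrite !mxE.
under eq_bigr do rewrite !mxE.
by rewrite sumr_const card_ord.
Qed.

Section ConstantPlusScalar.
Variables (F : fieldType) (n : nat) (a w : F).
Hypotheses (w_neq0 : w != 0) (eig_neq0 : n%:R * a + w != 0).

Lemma const_mx_add_scalar_unit : (const_mx a + w%:M : 'M[F]_n) \in unitmx.
Proof.
pose t := a / (n%:R * a + w).
suff inv : (const_mx a + w%:M) *m (w^-1 *: (1%:M - t *: const_mx 1)) = 1%:M :> 'M[F]_n.
  by case: (mulmx1_unit inv).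
rewrite -scalemxAr mulmxBr mulmx1 -scalemxAr mulmxDl mul_const_mx mul_scalar_mx.
apply/matrixP => i j; rewrite !mxE.
by case: (i == j); rewrite ?mulr1n ?mulr0n /t; field; rewrite w_neq0 eig_neq0.
Qed.

Lemma const_mx_add_scalar_eig (c : F) :
  (const_mx c : 'rV[F]_n) *m (const_mx a + w%:M) = (n%:R * a + w) *: const_mx c.
Proof.
rewrite mulmxDr mul_const_mx mul_mx_scalar.
by apply/matrixP => i j; rewrite !mxE mulr_natl; ring.
Qed.

Lemma const_quad_form (c : F) :
  ((const_mx c : 'rV[F]_n) *m invmx (const_mx a + w%:M) *m (const_mx c : 'rV[F]_n)^T) 0 0
  = c ^+ 2 * n%:R / (n%:R * a + w).
Proof.
have solve : (const_mx c : 'rV[F]_n) *m invmx (const_mx a + w%:M)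
             = (n%:R * a + w)^-1 *: const_mx c.
  rewrite -{2}(mulmxK const_mx_add_scalar_unit (const_mx c)).
  by rewrite const_mx_add_scalar_eig -scalemxAl scalerA mulVf // scale1r.
rewrite solve -scalemxAl trmx_const mul_const_mx !mxE mulr_natr.
by field.
Qed.

End ConstantPlusScalar.

Lemma post_var_repeated (R : realType) (k : 'rV[R]_2 -> 'rV[R]_2 -> R) w2 n xi x :
  0 < w2 -> 0 <= k xi xi ->
  post_var k w2 (fun _ : 'I_n => xi) x
  = k x x - k x xi ^+ 2 * n%:R / (n%:R * k xi xi + w2).
Proof.
move=> w2_gt0 kii_ge0; rewrite /post_var /=.
have -> : \matrix_(p, q) k xi xi = const_mx (k xi xi) :> 'M[R]_n.
  by apply/matrixP => p q; rewrite !mxE.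
have -> : \row_p k x xi = const_mx (k x xi) :> 'rV[R]_n.
  by apply/matrixP => p q; rewrite !mxE.
rewrite const_quad_form ?gt_eqF //.
by rewrite ltr_wpDl ?mulr_ge0.
Qed.

Lemma sqdist_ge0 (R : realType) (x y : 'rV[R]_2) : 0 <= sqdist x y.
Proof. by apply: sumr_ge0 => i _; apply: sqr_ge0. Qed.

Lemma sqdist_xx (R : realType) (x : 'rV[R]_2) : sqdist x x = 0.
Proof. by apply: big1 => i _; rewrite subrr expr0n. Qed.

Lemma se_kernel_xx (R : realType) (s0 l : R) (x : 'rV[R]_2) : se_kernel s0 l x x = s0.
Proof. by rewrite /se_kernel sqdist_xx oppr0 mul0r expR0 mulr1. Qed.

Lemma se_kernel_sqr (R : realType) (s0 l : R) (x y : 'rV[R]_2) : l != 0 ->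
  se_kernel s0 l x y ^+ 2 = s0 ^+ 2 * expR (- sqdist x y / l ^+ 2).
Proof.
move=> l_neq0; rewrite /se_kernel exprMn -expRM_natl.
by congr (_ * expR _); field.
Qed.

Lemma se_kernel_sqr_ge (R : realType) (s0 l b alpha : R) (x y : 'rV[R]_2) :
  0 < l -> 0 < b <= 1 -> 0 < alpha ->
  Num.sqrt (sqdist x y) <= l * Num.sqrt (- ln b) / alpha ->
  s0 ^+ 2 * b `^ (1 / alpha ^+ 2) <= se_kernel s0 l x y ^+ 2.
Proof.
move=> l_gt0 /andP[b_gt0 b_le1] alpha_gt0 near_y.
have lnb_le0 : ln b <= 0 by rewrite ln_le0.
have d_le : sqdist x y / l ^+ 2 <= - ln b / alpha ^+ 2.
  rewrite ler_pdivrMr ?exprn_gt0 // -[sqdist x y]sqr_sqrtr ?sqdist_ge0 //.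
  have -> : - ln b / alpha ^+ 2 * l ^+ 2 = (l * Num.sqrt (- ln b) / alpha) ^+ 2.
    by rewrite expr_div_n exprMn sqr_sqrtr ?oppr_ge0 // mulrC mulrA.
  rewrite ler_pXn2r // nnegrE ?sqrtr_ge0 //.
  by rewrite divr_ge0 ?mulr_ge0 ?sqrtr_ge0 ?ltW.
rewrite se_kernel_sqr ?gt_eqF // ler_wpM2l ?sqr_ge0 // /powR gt_eqF // ler_expR.
by rewrite mul1r mulNr lerNr -mulrN (mulrC (alpha ^- 2)).
Qed.

Lemma le_mul_of_ceil_div_le (R : archiRealFieldType) (c t : R) (n : nat) :
  0 < t -> (Num.ceil (c / t) <= n%:Z)%R -> c <= n%:R * t.
Proof. by move=> t_gt0; rewrite ceil_le_int -ler_pdivrMr. Qed.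

Lemma powR_gt1_of_lt1 (R : realType) (b p : R) : 0 < b < 1 -> p < 0 -> 1 < b `^ p.
Proof.
case/andP=> b_gt0 b_lt1 p_lt0.
have lnb_lt0 : ln b < 0 by rewrite ln_lt0 // b_gt0.
by rewrite /powR gt_eqF // expR_gt1 nmulr_lgt0.
Qed.

Lemma closed_form_post_var_le (R : realFieldType) (s0 w2 b q k2 : R) (n : nat) :
  0 < s0 -> 0 < w2 -> 0 <= b -> s0 ^+ 2 * (q * b) <= k2 ->
  w2 / s0 <= n%:R * (q - 1) ->
  s0 - k2 * n%:R / (n%:R * s0 + w2) <= s0 * (1 - b).
Proof.
move=> s0_gt0 w2_gt0 b_ge0 k2_ge n_large.
have den_gt0 : 0 < n%:R * s0 + w2 by rewrite ltr_wpDl // mulr_ge0 // ltW.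
rewrite mulrBr mulr1 lerD2l lerN2 ler_pdivlMr //.
rewrite ler_pdivrMr // in n_large.
have den_le : n%:R * s0 + w2 <= n%:R * s0 * q.
  by rewrite -subr_ge0 (_ : _ - _ = n%:R * (q - 1) * s0 - w2) ?subr_ge0 //; ring.
apply: (le_trans (y := s0 * b * (n%:R * s0 * q))).
  by rewrite ler_wpM2l // mulr_ge0 // ltW.
rewrite (_ : _ * (_ * q) = s0 ^+ 2 * (q * b) * n%:R); last by ring.
exact: ler_wpM2r.
Qed.

Theorem lemma3 (R : realType) (s0 l w2 Delta alpha : R) (xi : 'rV[R]_2) (n : nat) :
  0 < s0 -> 0 < l -> 0 < w2 -> 0 < Delta -> Delta < s0 -> 1 < alpha ->
  let rmax := l * Num.sqrt (- ln (1 - Delta / s0)) in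
  (Num.ceil (w2 / s0 *
      (((1 - Delta / s0) `^ (1 / alpha ^+ 2 - 1) - 1)^-1)) <= n%:Z)%R ->
  forall x : 'rV[R]_2, Num.sqrt (sqdist x xi) <= rmax / alpha ->
    MSE (se_kernel s0 l) w2 (fun _ : 'I_n => xi) x <= Delta.
Proof.
move=> s0_gt0 l_gt0 w2_gt0 Delta_gt0 Delta_lt_s0 alpha_gt1 rmax n_ge x x_near.
set b := 1 - Delta / s0.
have b_gt0 : 0 < b by rewrite subr_gt0 ltr_pdivrMr // mul1r.
have b_lt1 : b < 1 by rewrite ltrBlDr ltrDl divr_gt0.
set p := 1 / alpha ^+ 2.
have p_lt1 : p < 1.
  by rewrite /p mul1r invf_lt1 ?exprn_gt0 ?exprn_egt1 // (lt_trans ltr01).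
set q := b `^ (p - 1).
have q_gt1 : 1 < q by apply: powR_gt1_of_lt1; rewrite ?b_gt0 ?subr_lt0.
have qb : q * b = b `^ p.
  rewrite /q powRB; last by rewrite (gt_eqF b_gt0) implybT.
  by rewrite powRr1 ?ltW // divfK ?gt_eqF.
have kx_ge : s0 ^+ 2 * (q * b) <= se_kernel s0 l x xi ^+ 2.
  rewrite qb; apply: se_kernel_sqr_ge x_near => //; first by rewrite b_gt0 ltW.
  exact: lt_trans alpha_gt1.
have n_large : w2 / s0 <= n%:R * (q - 1).
  by apply: le_mul_of_ceil_div_le; rewrite ?subr_gt0.
rewrite /MSE post_var_repeated ?se_kernel_xx //; last exact: ltW.
have -> : Delta = s0 * (1 - b) by rewrite /b; field; rewrite gt_eqF.
by apply: closed_form_post_var_le kx_ge n_large => //; exact: ltW.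
Qed.
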